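(* Let $U$ be a subgroup of $G^*$, let $(p_j)_{j=1}^R\in\mathcal{P}^R$ be a system of representatives of the $U$-orbits of $\mathcal{P}$ (i.e. the sets $p_j^U=\{p_j^\varphi:\varphi\in U\}$, $j=1,\dots,R$, are exactly the distinct orbits $\{p^\varphi:\varphi\in U\}$, $p\in\mathcal{P}$), and let $(\mu_j)_{j=1}^R$ be matchings with $\mu_j\in C^U(p_j)$ for every $j$. Then there exists a unique resolute and $U$-symmetric matching mechanism $H$ such that $H(p_j)=\{\mu_j\}$ for every $j\in\{1,\dots,R\}$.
   Context: Fix $n\ge 2$, $W=\{1,\dots,n\}$, $M=\{n+1,\dots,2n\}$, $I=W\cup M$. Permutations compose right-to-left. A preference profile is a function $p$ on $I$ assigning to each $x\in W$ a linear order $p(x)$ on $M$ and to each $y\in M$ a linear order $p(y)$ on $W$; $\mathcal{P}$ is the set of preference profiles. A matching is a permutation $\mu$ of $I$ with $\mu(W)=M$, $\mu(M)=W$, $\mu(\mu(z))=z$; $\mathcal{M}$ is the set of matchings. $G^*=\{\varphi\in\mathrm{Sym}(I):\{\varphi(W),\varphi(M)\}=\{W,M\}\}$. For a linear order $R$ on $X\subseteq I$ and $\varphi\in\mathrm{Sym}(I)$, $\varphi R$ is the relation on $\varphi(X)$ with $(a,b)\in\varphi R$ iff $(\varphi^{-1}(a),\varphi^{-1}(b))\in R$. For $\varphi\in G^*$, $p^\varphi(z)=\varphi\,p(\varphi^{-1}(z))$ (this defines a group action of $G^*$ on $\mathcal{P}$); $\mu^\varphi=\varphi\mu\varphi^{-1}$;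 $S^\varphi=\{\mu^\varphi:\mu\in S\}$. A matching mechanism is a correspondence $F$ from $\mathcal{P}$ to $\mathcal{M}$; resolute if $|F(p)|=1$ for all $p$; $U$-symmetric if $F(p^\varphi)=F(p)^\varphi$ for all $p$, $\varphi\in U$. $\mathrm{Stab}_U(p)=\{\varphi\in U:p^\varphi=p\}$ and $C^U(p)=\{\mu\in\mathcal{M}:\mu^\varphi=\mu\text{ for all }\varphi\in\mathrm{Stab}_U(p)\}$. *)

From mathcomp Require Import all_boot all_order all_fingroup.
Set Implicit Arguments. Unset Strict Implicit. Unset Printing Implicit Defensive.

(* Agents I = {0,...,2n-1}; W = {0,...,n-1} (paper: 1..n), M = {n,...,2n-1}
   (paper: n+1..2n).  This is a harmless shift of labels by one. *)
Definition agent (n : nat) := 'I_(n + n).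
Definition Wset (n : nat) : {set agent n} := [set i : agent n | (i < n)%N].
Definition Mset (n : nat) : {set agent n} := [set i : agent n | (n <= i)%N].

Definition relI (n : nat) := {set agent n * agent n}.

Definition is_lin_order n (X : {set agent n}) (R : relI n) : Prop :=
  [/\ R \subset setX X X,
      (forall x, x \in X -> (x, x) \in R),
      (forall x y, (x, y) \in R -> (y, x) \in R -> x = y),
      (forall x y z, (x, y) \in R -> (y, z) \in R -> (x, z) \in R)
    & (forall x y, x \in X -> y \in X -> (x, y) \in R \/ (y, x) \in R)].

Definition profile (n : nat) := {ffun agent n -> relI n}.

Definition is_profile n (p : profile n) : Prop :=
  (forall x, x \in Wset n -> is_lin_order (Mset n) (p x)) /\
  (forall y, y \in Mset n -> is_lin_order (Wset n) (p y)).

Definition is_matching n (mu : {perm agent n}) : Prop :=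
  [/\ mu @: Wset n = Mset n, mu @: Mset n = Wset n & forall z, mu (mu z) = z].

Definition Gstar n : {set {perm agent n}} :=
  [set phi : {perm agent n} |
    [set phi @: Wset n; phi @: Mset n] == [set Wset n; Mset n]].

Definition act_rel n (phi : {perm agent n}) (R : relI n) : relI n :=
  [set ab | ((phi^-1)%g ab.1, (phi^-1)%g ab.2) \in R].

Definition act_prof n (phi : {perm agent n}) (p : profile n) : profile n :=
  [ffun z => act_rel phi (p ((phi^-1)%g z))].

(* mu^phi = phi mu phi^-1 (right-to-left composition), i.e. z |-> phi (mu (phi^-1 z)).
   In MathComp (s * t) z = t (s z), so this is phi^-1 * mu * phi = mu ^ phi. *)
Definition act_match n (phi mu : {perm agent n}) : {perm agent n} :=
  (phi^-1 * mu * phi)%g.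

Definition act_matchset n (phi : {perm agent n}) (S : {set {perm agent n}})
  : {set {perm agent n}} := [set act_match phi mu | mu in S].

Definition orbit_prof n (U : {set {perm agent n}}) (p : profile n) : {set profile n} :=
  [set act_prof phi p | phi in U].

Definition Stab n (U : {set {perm agent n}}) (p : profile n) : {set {perm agent n}} :=
  [set phi in U | act_prof phi p == p].

Definition in_CU n (U : {set {perm agent n}}) (p : profile n) (mu : {perm agent n}) : Prop :=
  is_matching mu /\ (forall phi, phi \in Stab U p -> act_match phi mu = mu).

(* Matching mechanisms: correspondences from P to the set of matchings
   (only the values on P matter). *)
Definition mechanism n := profile n -> {set {perm agent n}}.

Definition is_mechanism n (F : mechanism n) : Prop :=
  forall p, is_profile p -> forall mu, mu \in F p -> is_matching mu.

Definition resolute n (F : mechanism n) : Prop :=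
  forall p, is_profile p -> #|F p| = 1%N.

Definition U_symmetric n (U : {set {perm agent n}}) (F : mechanism n) : Prop :=
  forall p phi, is_profile p -> phi \in U ->
    F (act_prof phi p) = act_matchset phi (F p).

From mathcomp Require Import all_boot all_order all_fingroup.
Set Implicit Arguments. Unset Strict Implicit. Unset Printing Implicit Defensive.

(* Every profile p lies in the orbit of exactly one representative, say
   p = p_j^phi with phi in U, and one sets H(p) = {mu_j^phi}.  This does not
   depend on the choice of phi: if p_j^phi = p_j^psi then phi psi^-1 stabilises
   p_j, hence fixes mu_j because mu_j is in C^U(p_j).  Conversely, any
   U-symmetric mechanism with H(p_j) = {mu_j} must satisfy
   H(p_j^phi) = H(p_j)^phi = {mu_j^phi}, which gives uniqueness. *)

Local Open Scope group_scope.

Section PermSets.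

Variable T : finType.
Implicit Types (phi mu : {perm T}) (A B : {set T}).

Lemma imset_permV phi A B : phi @: A = B -> phi^-1 @: B = A.
Proof.
move<-; rewrite -imset_comp -[RHS]imset_id; apply: eq_imset => z /=.
by rewrite -permM mulgV perm1.
Qed.

Lemma imset_conjg mu phi A : (mu ^ phi) @: A = phi @: (mu @: (phi^-1 @: A)).
Proof. by rewrite -!imset_comp; apply: eq_imset => z /=; rewrite !permM. Qed.

Definition swaps mu A B := mu @: A = B /\ mu @: B = A.

Lemma swapsV phi A B : swaps phi A B -> swaps phi^-1 A B.
Proof. by case=> /imset_permV eA /imset_permV eB; split. Qed.

Lemma swaps_conjg mu phi A B :
  swaps mu A B -> (phi @: A = A /\ phi @: B = B) \/ swaps phi A B ->
  swaps (mu ^ phi) A B.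
Proof.
move=> [muA muB] [[phiA phiB] | phi_sw]; rewrite /swaps !imset_conjg.
  by rewrite (imset_permV phiA) (imset_permV phiB) muA muB.
by have [-> ->] := swapsV phi_sw; rewrite muA muB; case: phi_sw.
Qed.

Lemma fixes_or_swaps phi A B : A != B ->
  [set phi @: A; phi @: B] = [set A; B] ->
  (phi @: A = A /\ phi @: B = B) \/ swaps phi A B.
Proof.
move=> neqAB ePair.
have phiA : phi @: A \in [set A; B] by rewrite -ePair set21.
have phiB : phi @: B \in [set A; B] by rewrite -ePair set22.
have neq_phi : phi @: A != phi @: B by rewrite (inj_eq (imset_inj perm_inj)).
move: phiA phiB neq_phi; rewrite /swaps !inE.
by case/orP=> /eqP-> /orP[] /eqP->; rewrite ?eqxx //; [left | right].
Qed.

Lemma involutive_conjg mu phi :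
  (forall z, mu (mu z) = z) -> forall z, (mu ^ phi) ((mu ^ phi) z) = z.
Proof.
move=> mu_inv; have mu2 : mu * mu = 1 by apply/permP => z; rewrite permM mu_inv perm1.
by move=> z; rewrite -permM -conjMg mu2 conj1g perm1.
Qed.

End PermSets.

Lemma act_match_conjg n (phi mu : {perm agent n}) : act_match phi mu = mu ^ phi.
Proof. by rewrite /act_match /conjg mulgA. Qed.

Lemma act_rel1 n (R : relI n) : act_rel 1 R = R.
Proof. by apply/setP => -[a b]; rewrite !inE /= invg1 !perm1. Qed.

Lemma act_relM n (phi psi : {perm agent n}) R :
  act_rel (phi * psi) R = act_rel psi (act_rel phi R).
Proof. by apply/setP => -[a b]; rewrite !inE /= invMg !permM. Qed.

Lemma act_prof1 n (p : profile n) : act_prof 1 p = p.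
Proof. by apply/ffunP => z; rewrite ffunE invg1 perm1 act_rel1. Qed.

Lemma act_profM n (phi psi : {perm agent n}) p :
  act_prof (phi * psi) p = act_prof psi (act_prof phi p).
Proof. by apply/ffunP => z; rewrite !ffunE act_relM invMg permM. Qed.

Lemma act_profK n (phi : {perm agent n}) : cancel (act_prof phi) (act_prof phi^-1).
Proof. by move=> p; rewrite -act_profM mulgV act_prof1. Qed.

Lemma Wset_neq_Mset n : (0 < n)%N -> Wset n != Mset n.
Proof.
move=> n_gt0; have i0 : (0 < n + n)%N by rewrite addn_gt0 n_gt0.
apply/negP => /eqP eWM; have : Ordinal i0 \in Wset n by rewrite inE.
by rewrite eWM inE /= leqNgt n_gt0.
Qed.

Lemma is_matching_act n (phi mu : {perm agent n}) : (0 < n)%N ->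
  phi \in Gstar n -> is_matching mu -> is_matching (act_match phi mu).
Proof.
move=> n_gt0; rewrite inE => /eqP /(fixes_or_swaps (Wset_neq_Mset n_gt0)) phiWM.
move=> [muW muM mu_inv]; rewrite act_match_conjg.
have [] := swaps_conjg (conj muW muM) phiWM.
by split=> //; apply: involutive_conjg.
Qed.

Section Orbits.

Variables (n : nat) (U : {group {perm agent n}}).

Lemma mem_orbit_prof p : p \in orbit_prof U p.
Proof. by rewrite -{1}(act_prof1 p); apply: imset_f. Qed.

Lemma orbit_prof_act phi p : phi \in U -> orbit_prof U (act_prof phi p) = orbit_prof U p.
Proof.
have sub_orbit psi q : psi \in U -> orbit_prof U (act_prof psi q) \subset orbit_prof U q.
  move=> psiU; apply/subsetP => _ /imsetP[chi chiU ->].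
  by rewrite -act_profM; apply: imset_f; rewrite groupM.
move=> phiU; apply/eqP; rewrite eqEsubset sub_orbit //=.
by rewrite -{1}(act_profK phi p) sub_orbit ?groupV.
Qed.

End Orbits.

Section Representatives.

Variables (n : nat) (U : {group {perm agent n}}) (R : nat).
Variables (ps : 'I_R -> profile n) (mus : 'I_R -> {perm agent n}).
Hypothesis hdist : forall j k, orbit_prof U (ps j) = orbit_prof U (ps k) -> j = k.
Hypothesis hcover : forall q, is_profile q -> exists j, orbit_prof U q = orbit_prof U (ps j).
Hypothesis hmus : forall j, in_CU U (ps j) (mus j).

Lemma profile_orbit_rep p : is_profile p ->
  exists j, exists2 phi, phi \in U & p = act_prof phi (ps j).
Proof.
move=> /hcover[j ej]; have := mem_orbit_prof U p.
by rewrite ej => /imsetP[phi phiU ->]; exists j, phi.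
Qed.

Lemma orbit_rep_unique j k phi psi : phi \in U -> psi \in U ->
  act_prof phi (ps j) = act_prof psi (ps k) ->
  j = k /\ act_match phi (mus j) = act_match psi (mus k).
Proof.
move=> phiU psiU e; have jk : j = k.
  by apply: hdist; rewrite -(orbit_prof_act _ phiU) e orbit_prof_act.
subst k; split => //.
have stab : phi * psi^-1 \in Stab U (ps j).
  by rewrite inE groupM ?groupV //= act_profM e -act_profM mulgV act_prof1.
have fix_mu := (hmus j).2 _ stab; rewrite !act_match_conjg in fix_mu *.
by rewrite -[in RHS]fix_mu -conjgM mulgKV.
Qed.

Definition rep_mechanism : mechanism n := fun p =>
  if [pick x : 'I_R * {perm agent n} | (x.2 \in U) && (p == act_prof x.2 (ps x.1))]
    is Some x then [set act_match x.2 (mus x.1)] else set0.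

Lemma rep_mechanismE j phi : phi \in U ->
  rep_mechanism (act_prof phi (ps j)) = [set act_match phi (mus j)].
Proof.
move=> phiU; rewrite /rep_mechanism; case: pickP => [[k psi] /andP[/= psiU /eqP e] | none].
  by have [-> ->] := orbit_rep_unique psiU phiU (esym e).
by have := none (j, phi); rewrite /= phiU eqxx.
Qed.

Lemma rep_mechanism_rep j : rep_mechanism (ps j) = [set mus j].
Proof. by rewrite -{1}(act_prof1 (ps j)) rep_mechanismE // act_match_conjg conjg1. Qed.

Lemma resolute_rep_mechanism : resolute rep_mechanism.
Proof.
move=> p /profile_orbit_rep[j [phi phiU ->]].
by rewrite rep_mechanismE // cards1.
Qed.

Lemma U_symmetric_rep_mechanism : U_symmetric U rep_mechanism.
Proof.
move=> p phi /profile_orbit_rep[j [psi psiU ->]] phiU.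
rewrite -act_profM !rep_mechanismE ?groupM // /act_matchset imset_set1.
by rewrite !act_match_conjg conjgM.
Qed.

Lemma is_mechanism_rep_mechanism : (0 < n)%N -> U \subset Gstar n ->
  is_mechanism rep_mechanism.
Proof.
move=> n_gt0 sUG p /profile_orbit_rep[j [phi phiU ->]] mu.
rewrite rep_mechanismE // => /set1P->.
exact: is_matching_act (subsetP sUG _ phiU) (hmus j).1.
Qed.

Hypothesis hps : forall j, is_profile (ps j).

Lemma U_symmetric_eq_rep (H1 H2 : mechanism n) :
  U_symmetric U H1 -> U_symmetric U H2 -> (forall j, H1 (ps j) = H2 (ps j)) ->
  forall p, is_profile p -> H1 p = H2 p.
Proof.
move=> symH1 symH2 eH p /profile_orbit_rep[j [phi phiU ->]].
by rewrite symH1 ?symH2 ?eH.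
Qed.

End Representatives.

Close Scope group_scope.

Theorem theorem10 (n : nat) (hn : (2 <= n)%N)
  (U : {group {perm agent n}}) (hU : U \subset Gstar n)
  (R : nat) (ps : 'I_R -> profile n) (mus : 'I_R -> {perm agent n})
  (hps : forall j, is_profile (ps j))
  (hdist : forall j k, orbit_prof U (ps j) = orbit_prof U (ps k) -> j = k)
  (hcover : forall q, is_profile q -> exists j, orbit_prof U q = orbit_prof U (ps j))
  (hmus : forall j, in_CU U (ps j) (mus j)) :
  (exists H : mechanism n,
     [/\ is_mechanism H, resolute H, U_symmetric U H
       & forall j, H (ps j) = [set mus j]]) /\
  (forall H1 H2 : mechanism n,
     is_mechanism H1 -> resolute H1 -> U_symmetric U H1 ->
     (forall j, H1 (ps j) = [set mus j]) ->
     is_mechanism H2 -> resolute H2 -> U_symmetric U H2 ->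
     (forall j, H2 (ps j) = [set mus j]) ->
     forall p, is_profile p -> H1 p = H2 p).
Proof.
have n_gt0 : (0 < n)%N by apply: leq_trans hn.
split.
  exists (rep_mechanism U ps mus); split.
  - exact: is_mechanism_rep_mechanism.
  - exact: resolute_rep_mechanism.
  - exact: U_symmetric_rep_mechanism.
  - exact: rep_mechanism_rep.
move=> H1 H2 _ _ symH1 repH1 _ _ symH2 repH2.
by apply: (U_symmetric_eq_rep hcover hps symH1 symH2) => j; rewrite repH1 repH2.
Qed.
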